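(* Let $n\ge 2$ and let $\Gamma=(\gamma_{i,j})\in\mathcal{M}_n(\mathbb{R})$ be symmetric with entries in $[0,1]$, zero diagonal, and at least one strictly positive off-diagonal entry in each row, such that the weighted graph with weight matrix $\Gamma$ is connected. Let $\boldsymbol{\eta}=\Gamma\mathbf{1}_n$, $L=\operatorname{diag}(\boldsymbol{\eta})-\Gamma$, and \[ E\coloneqq L_{2:n,2:n}+\Gamma_{2:n,1}\,\mathbf{1}_{n-1}^\top\in\mathcal{M}_{n-1}(\mathbb{R}). \] Then every eigenvalue of $E$ is at least $\min\Gamma_{2:n,1}=\min_{2\le i\le n}\gamma_{i,1}$.
   Context: $\mathbf{1}_m$ is the all-ones vector of length $m$. $L_{2:n,2:n}$ is the submatrix of $L$ formed by rows and columns $2,\dots,n$; $\Gamma_{2:n,1}$ is the column vector $(\gamma_{2,1},\dots,\gamma_{n,1})^\top$. *)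

From HB Require Import structures.
From mathcomp Require Import all_boot all_order all_algebra.
From mathcomp Require Import reals.
From mathcomp Require Import complex.
Set Implicit Arguments. Unset Strict Implicit. Unset Printing Implicit Defensive.
Import Order.TTheory GRing.Theory Num.Theory.
Local Open Scope ring_scope.

(* Conventions: the paper's dimension n is written here as n.+2 (so n >= 2
   is automatic); index 1 of the paper is ord0, index i+1 >= 2 is lift ord0 i. *)

Section Defs.
Variable R : realType.
Variable n : nat.
Implicit Type G : 'M[R]_(n.+2).

Definition eta_vec G : 'cV[R]_(n.+2) := G *m const_mx 1.

Definition lapl G : 'M[R]_(n.+2) := diag_mx (eta_vec G)^T - G.

Definition Emat G : 'M[R]_(n.+1) :=
  \matrix_(i, j) (lapl G (lift ord0 i) (lift ord0 j) + G (lift ord0 i) ord0).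

Definition gmin G : R :=
  \big[Num.min/G (lift ord0 ord0) ord0]_(i < n.+1) G (lift ord0 i) ord0.

Definition wconnected G : Prop :=
  forall i j : 'I_(n.+2), connect [rel a b | 0 < G a b] i j.
End Defs.

From HB Require Import structures.
From mathcomp Require Import all_boot all_order all_algebra.
From mathcomp Require Import reals.
From mathcomp Require Import complex.
From mathcomp Require Import ring.
Import Order.TTheory GRing.Theory Num.Theory.
Set Implicit Arguments. Unset Strict Implicit. Unset Printing Implicit Defensive.
Local Open Scope ring_scope.

(* Let v be a left eigenvector of E for lam and x = (0, v) in C^n. The
   eigen-equation says that y = x L satisfies y_j = lam x_j + y_1 for every j,
   while the entries of y sum to 0 because L 1 = 0. Pairing with x^* gives
     n (x L x^* ) = lam (n |x|^2 - |sum_j x_j|^2),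
   and the last factor is positive since x is not constant. As x_1 = 0, the
   Laplacian form x L x^* = 1/2 sum_ij g_ij |x_i - x_j|^2 is at least
   sum_i g_i1 |x_i|^2 >= (min_i g_i1) |x|^2, which forces lam >= min_i g_i1. *)

Section WeightedSquares.
Variables (C : numClosedFieldType) (N : nat).
Implicit Types x y : 'I_N -> C.

Lemma sum_weighted_sqr_diff (a : 'I_N -> 'I_N -> C) x :
  (forall i j, a i j = a j i) ->
  \sum_i \sum_j a i j * ((x i - x j) * (x i - x j)^*) =
  2%:R * (\sum_i (\sum_j a i j) * (x i * (x i)^*)
          - \sum_i \sum_j a i j * (x i * (x j)^*)).
Proof.
move=> a_sym.
have expand i j : a i j * ((x i - x j) * (x i - x j)^*) =
    a i j * (x i * (x i)^*) + a j i * (x j * (x j)^*)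
    - a i j * (x i * (x j)^*) - a j i * (x j * (x i)^*).
  by rewrite (a_sym j i) rmorphB /=; ring.
under eq_bigr do under eq_bigr do rewrite expand.
under eq_bigr do rewrite !sumrB big_split /=.
rewrite !sumrB big_split /=.
rewrite [X in _ + X - _ - _]exchange_big [X in _ - X]exchange_big /=.
under [X in _ = 2%:R * (X - _)]eq_bigr do rewrite mulr_suml.
ring.
Qed.

Lemma sqr_norm_sum_lt x i j : x i != x j ->
  (\sum_k x k) * (\sum_k x k)^* < N%:R * \sum_k x k * (x k)^*.
Proof.
move=> xij; rewrite -subr_gt0 -(pmulr_rgt0 _ (ltr0n _ 2)).
have -> : (\sum_k x k) * (\sum_k x k)^* = \sum_k \sum_l 1 * (x k * (x l)^*).
  rewrite rmorph_sum mulr_suml; apply: eq_bigr => k _.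
  by rewrite mulr_sumr; apply: eq_bigr => l _; rewrite mul1r.
have -> : N%:R * \sum_k x k * (x k)^* = \sum_k (\sum_(l < N) 1) * (x k * (x k)^*).
  by rewrite sumr_const card_ord mulr_sumr.
rewrite -sum_weighted_sqr_diff //.
have sqr_ge0 k l : 0 <= 1 * ((x k - x l) * (x k - x l)^*) by rewrite mul1r mul_conjC_ge0.
rewrite (bigD1 i) //= (bigD1 j) //= -addrA ltr_wpDr //.
  by rewrite addr_ge0 //; apply: sumr_ge0 => k _; [| apply: sumr_ge0 => l _].
by rewrite mul1r mul_conjC_gt0 subr_eq0.
Qed.

Lemma sum_mul_conj_affine x y (lam c : C) :
  (forall j, y j = lam * x j + c) -> \sum_j y j = 0 ->
  N%:R * \sum_j y j * (x j)^* =
  lam * (N%:R * \sum_j x j * (x j)^* - (\sum_j x j) * (\sum_j x j)^*).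
Proof.
move=> yE y_sum0.
have sum_yE : lam * \sum_j x j + N%:R * c = 0.
  rewrite -[RHS]y_sum0; under [RHS]eq_bigr do rewrite yE.
  by rewrite big_split /= -mulr_sumr sumr_const card_ord mulr_natl.
under eq_bigr do rewrite yE mulrDl -mulrA.
rewrite big_split /= -!mulr_sumr -rmorph_sum; apply/eqP; rewrite -subr_eq0.
set s := \sum_j x j; set S := \sum_j x j * _.
have -> : N%:R * (lam * S + c * s^*) - lam * (N%:R * S - s * s^*) =
  (lam * s + N%:R * c) * s^* by ring.
by rewrite sum_yE mul0r.
Qed.
End WeightedSquares.

Lemma sum_row_col_le {T : numDomainType} {m} (F : 'I_m.+1 -> 'I_m.+1 -> T) :
  (forall i j, 0 <= F i j) ->
  \sum_i F (lift ord0 i) ord0 + \sum_j F ord0 (lift ord0 j) <= \sum_i \sum_j F i j.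
Proof.
move=> F_ge0; rewrite big_ord_recl addrC lerD //.
  by rewrite big_ord_recl ler_wpDl.
apply: ler_sum => i _; rewrite big_ord_recl ler_wpDr //.
by apply: sumr_ge0.
Qed.

Definition extend0 {V : zmodType} {m} (v : 'rV[V]_m) (k : 'I_m.+1) : V :=
  if unlift ord0 k is Some i then v 0 i else 0.

Lemma extend0_ord0 {V : zmodType} {m} (v : 'rV[V]_m) : extend0 v ord0 = 0.
Proof. by rewrite /extend0 unlift_none. Qed.

Lemma extend0_lift {V : zmodType} {m} (v : 'rV[V]_m) i : extend0 v (lift ord0 i) = v 0 i.
Proof. by rewrite /extend0 liftK. Qed.

Section Laplacian.
Variables (R : realType) (n : nat) (G : 'M[R]_(n.+2)).
Local Open Scope complex_scope.

Lemma laplE i j : lapl G i j = (\sum_k G i k) *+ (i == j) - G i j.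
Proof.
rewrite !mxE; congr (_ *+ _ - _).
by apply: eq_bigr => k _; rewrite mxE mulr1.
Qed.

Lemma lapl_row_sum i : \sum_j lapl G i j = 0.
Proof.
under eq_bigr do rewrite laplE.
rewrite sumrB (bigD1 i) //= eqxx [X in _ + X - _]big1 ?addr0 ?subrr // => j.
by rewrite eq_sym => /negbTE ->.
Qed.

Definition mul_lapl (x : 'I_(n.+2) -> R[i]) j := \sum_i x i * (lapl G i j)%:C.

Lemma mul_lapl_sum x : \sum_j mul_lapl x j = 0.
Proof.
rewrite exchange_big big1 // => i _.
by rewrite -mulr_sumr -rmorph_sum lapl_row_sum mulr0.
Qed.

Lemma mul_lapl_Emat_eigen (v : 'rV[R[i]]_(n.+1)) lam :
  v *m map_mx (fun r : R => r%:C) (Emat G) = lam *: v ->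
  forall j, mul_lapl (extend0 v) j = lam * extend0 v j + mul_lapl (extend0 v) ord0.
Proof.
move=> eig j; case: (unliftP ord0 j) => [j'|] ->; last first.
  by rewrite extend0_ord0 mulr0 add0r.
have lapl_col0 i : lapl G (lift ord0 i) ord0 = - G (lift ord0 i) ord0.
  by rewrite laplE eq_sym (negbTE (neq_lift _ _)) sub0r.
have eig_j : lam * v 0 j' = \sum_i v 0 i * (lapl G (lift ord0 i) (lift ord0 j'))%:C
                           + \sum_i v 0 i * (G (lift ord0 i) ord0)%:C.
  have := congr1 (fun M : 'M_(1, n.+1) => M 0 j') eig; rewrite !mxE => <-.
  by rewrite -big_split; apply: eq_bigr => i _; rewrite !mxE rmorphD mulrDr.
rewrite /mul_lapl !(big_ord_recl n.+1) !extend0_ord0 !mul0r !add0r extend0_lift eig_j.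
under [LHS]eq_bigr do rewrite extend0_lift.
under [X in _ = _ + X]eq_bigr do rewrite extend0_lift lapl_col0 rmorphN mulrN.
by rewrite sumrN addrK.
Qed.

Lemma lapl_formE x : \sum_j mul_lapl x j * (x j)^* =
  \sum_i (\sum_j (G i j)%:C) * (x i * (x i)^*)
  - \sum_i \sum_j (G i j)%:C * (x i * (x j)^*).
Proof.
rewrite /mul_lapl; under eq_bigr do rewrite mulr_suml.
rewrite exchange_big -sumrB; apply: eq_bigr => i _.
under eq_bigr do rewrite laplE rmorphB rmorphMn /= mulrBr mulrBl.
rewrite sumrB (bigD1 i) //= eqxx [X in _ + X - _]big1 ?addr0 => [|j]; last first.
  by rewrite eq_sym => /negbTE ->; rewrite mulr0n mulr0 mul0r.
rewrite rmorph_sum /=; congr (_ - _); first by ring.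
by apply: eq_bigr => j _; ring.
Qed.

Lemma gmin_le i : gmin G <= G (lift ord0 i) ord0.
Proof. exact: bigmin_le. Qed.

Hypotheses (Gsym : G^T = G) (G_ge0 : forall i j, 0 <= G i j).

Lemma gmin_ge0 : 0 <= gmin G.
Proof. exact: le_bigmin. Qed.

Lemma gmin_le_lapl_form x : x ord0 = 0 ->
  (gmin G)%:C * \sum_j x j * (x j)^* <= \sum_j mul_lapl x j * (x j)^*.
Proof.
move=> x0; have G_sym i j : G i j = G j i by rewrite -{1}Gsym mxE.
have gmin_weight_le i k :
    (gmin G)%:C * (x k * (x k)^*) <= (G (lift ord0 i) ord0)%:C * (x k * (x k)^*).
  by rewrite ler_wpM2r ?mul_conjC_ge0 // lecR gmin_le.
rewrite lapl_formE -(@ler_pM2l _ 2%:R) ?ltr0n // -sum_weighted_sqr_diff; last first.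
  by move=> i j; rewrite G_sym.
apply: le_trans (sum_row_col_le _); last first.
  by move=> i j; rewrite mulr_ge0 ?mul_conjC_ge0 ?lecR.
(* As x_1 = 0, the first row and column of the pairwise sum are the terms g_i1 |x_i|^2. *)
rewrite big_ord_recl x0 mul0r add0r mulr_sumr mulr_natl mulr2n.
apply: lerD; apply: ler_sum => i _; first by rewrite subr0 gmin_weight_le.
by rewrite sub0r rmorphN mulrNN G_sym gmin_weight_le.
Qed.
End Laplacian.

Theorem lemma4p5 (R : realType) (n : nat) (G : 'M[R]_(n.+2))
  (Gsym : G^T = G)
  (G01 : forall i j, 0 <= G i j <= 1)
  (Gdiag : forall i, G i i = 0)
  (Grow : forall i, exists j, j != i /\ 0 < G i j)
  (Gconn : wconnected G) :
  forall lam : R[i],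
    eigenvalue (map_mx (fun x : R => (x%:C)%C) (Emat G)) lam ->
    ((gmin G)%:C)%C <= lam.
Proof.
move=> lam /eigenvalueP [v eig v_neq0].
have G_ge0 i j : 0 <= G i j by case/andP: (G01 i j).
have [k vk_neq0] : exists k, v 0 k != 0.
  apply/existsP; apply: contraNT v_neq0 => /existsPn v0.
  by apply/eqP/rowP => k; rewrite mxE; apply/eqP/negPn.
set x := extend0 v; set S := \sum_j x j * (x j)^*; set s := \sum_j x j.
have P_gt0 : 0 < n.+2%:R * S - s * s^*.
  rewrite subr_gt0 (@sqr_norm_sum_lt _ _ x ord0 (lift ord0 k)) //.
  by rewrite /x extend0_ord0 extend0_lift eq_sym.
have form_id := sum_mul_conj_affine (mul_lapl_Emat_eigen eig) (mul_lapl_sum _ _).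
have lapl_form_ge := gmin_le_lapl_form Gsym G_ge0 (extend0_ord0 v).
have m_ge0 : 0 <= ((gmin G)%:C)%C by rewrite lecR gmin_ge0.
rewrite -(ler_pM2r P_gt0) -form_id.
apply: le_trans (_ : _ <= ((gmin G)%:C)%C * (n.+2%:R * S)) _.
  by rewrite ler_wpM2l // gerBl mul_conjC_ge0.
by rewrite mulrCA ler_wpM2l // ler0n.
Qed.
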